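(* On $\mathbb{R}^3$ with coordinates $(x,y,z)$ (the isometry group $E(1,1)$ of the flat Lorentzian plane, with its left-invariant structure), consider the Lorentzian metric $$g_1 = -dz^2 + (e^z dx + e^{-z} dy)^2 + (e^z dx - e^{-z} dy)^2 .$$ Let $F_1 = \tfrac12\big(e^{-z}\partial_x + e^{z}\partial_y\big)$, $F_2 = \tfrac12\big(e^{-z}\partial_x - e^{z}\partial_y\big)$, $F_3 = \partial_z$. For arbitrary real constants $a,b,c$ let $$X = 4a\Big(x e^z F_1 + x e^z F_2 - \tfrac12 F_3\Big) + 4(1-a)\Big(y e^{-z} F_1 - y e^{-z} F_2 + \tfrac12 F_3\Big) + b\,(e^z F_1 + e^z F_2) + c\,(e^{-z} F_1 - e^{-z} F_2).$$ Then $$2\,\mathrm{Ric}[g_1] + L_X g_1 - 4\,g_1 = 0 ,$$ and, for every choice of $a,b,c$, there is no smooth function $f$ on $\mathbb{R}^3$ with $X = \nabla f$ (gradient with respect to $g_1$). Hence $g_1$ is a shrinking non-gradient Lorentzian Ricci soliton.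
   Context: For a pseudo-Riemannian metric $g$ on a manifold $M$, a vector field $X$ and a constant $\alpha$, $(M,g,X,\alpha)$ is a Ricci soliton structure if $2\,\mathrm{Ric}[g] + L_X g + \alpha g = 0$, where $L_X$ denotes the Lie derivative. The soliton is called shrinking, steady, or expanding according as $\alpha<0$, $\alpha=0$, or $\alpha>0$. It is called gradient if $X=\nabla f$ for some function $f$, and non-gradient if $X\neq \nabla f$ for every function $f$. *)

From Stdlib Require Import Reals Lra ClassicalEpsilon.
Open Scope R_scope.

(* Points of R^3 with coordinates (x,y,z) = (coord 0, coord 1, coord 2). *)
Definition pt : Type := (R * R * R)%type.

Definition coord (i : nat) (p : pt) : R :=
  match i with
  | O => fst (fst p)
  | S O => snd (fst p)
  | _ => snd p
  end.

Definition upd (i : nat) (p : pt) (t : R) : pt :=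
  match i with
  | O => (t, snd (fst p), snd p)
  | S O => (fst (fst p), t, snd p)
  | _ => (fst p, t)
  end.

(* Partial derivative d/dx^i of a scalar field (the derivative when it exists;
   all fields below to which it is applied are smooth). *)
Definition pd (i : nat) (f : pt -> R) (p : pt) : R :=
  epsilon (inhabits 0)
    (fun l => derivable_pt_lim (fun t => f (upd i p t)) (coord i p) l).

Definition sum3 (F : nat -> R) : R := F 0%nat + F 1%nat + F 2%nat.

Definition cont3 (h : pt -> R) : Prop :=
  forall p eps, 0 < eps -> exists del, 0 < del /\
    forall q, Rabs (coord 0 q - coord 0 p) < del ->
              Rabs (coord 1 q - coord 1 p) < del ->
              Rabs (coord 2 q - coord 2 p) < del ->
              Rabs (h q - h p) < eps.

Fixpoint iter_pd (l : list nat) (f : pt -> R) : pt -> R :=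
  match l with
  | nil => f
  | cons i l' => pd i (iter_pd l' f)
  end.

Definition smooth (f : pt -> R) : Prop :=
  forall l : list nat,
    cont3 (iter_pd l f) /\
    forall i p, (i < 3)%nat ->
      exists d, derivable_pt_lim (fun t => iter_pd l f (upd i p t)) (coord i p) d.

Definition tensor2 : Type := nat -> nat -> pt -> R.
(* A vector field in coordinates: components X i (coefficient of d/dx^i) *)
Definition vfield : Type := nat -> pt -> R.

(* inverse matrix of a 3x3 (symmetric) matrix via cofactors, indices mod 3 *)
Definition det3 (g : tensor2) (p : pt) : R :=
  g 0%nat 0%nat p * (g 1%nat 1%nat p * g 2%nat 2%nat p - g 1%nat 2%nat p * g 2%nat 1%nat p)
  - g 0%nat 1%nat p * (g 1%nat 0%nat p * g 2%nat 2%nat p - g 1%nat 2%nat p * g 2%nat 0%nat p)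
  + g 0%nat 2%nat p * (g 1%nat 0%nat p * g 2%nat 1%nat p - g 1%nat 1%nat p * g 2%nat 0%nat p).

Definition ginv (g : tensor2) (i j : nat) (p : pt) : R :=
  let j1 := Nat.modulo (j + 1) 3 in let j2 := Nat.modulo (j + 2) 3 in
  let i1 := Nat.modulo (i + 1) 3 in let i2 := Nat.modulo (i + 2) 3 in
  (g j1 i1 p * g j2 i2 p - g j1 i2 p * g j2 i1 p) / det3 g p.

Definition Gamma (g : tensor2) (k i j : nat) (p : pt) : R :=
  / 2 * sum3 (fun l => ginv g k l p *
     (pd i (g j l) p + pd j (g i l) p - pd l (g i j) p)).

Definition Ric (g : tensor2) (i j : nat) (p : pt) : R :=
  sum3 (fun k => pd k (Gamma g k i j) p - pd j (Gamma g k i k) p)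
  + sum3 (fun k => sum3 (fun l =>
       Gamma g k k l p * Gamma g l i j p - Gamma g k j l p * Gamma g l i k p)).

Definition LieD (X : vfield) (g : tensor2) (i j : nat) (p : pt) : R :=
  sum3 (fun k => X k p * pd k (g i j) p
                 + g k j p * pd i (X k) p + g i k p * pd j (X k) p).

Definition grad (g : tensor2) (f : pt -> R) (i : nat) (p : pt) : R :=
  sum3 (fun j => ginv g i j p * pd j f p).

(* The metric g1 = -dz^2 + (e^z dx + e^-z dy)^2 + (e^z dx - e^-z dy)^2 *)
Definition th1 (i : nat) (p : pt) : R :=
  match i with O => exp (coord 2 p) | S O => exp (- coord 2 p) | _ => 0 end.
Definition th2 (i : nat) (p : pt) : R :=
  match i with O => exp (coord 2 p) | S O => - exp (- coord 2 p) | _ => 0 end.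
Definition th3 (i : nat) (p : pt) : R :=
  match i with O => 0 | S O => 0 | _ => 1 end.

Definition g1 : tensor2 := fun i j p =>
  - (th3 i p * th3 j p) + th1 i p * th1 j p + th2 i p * th2 j p.

Definition F1 : vfield := fun i p =>
  match i with O => / 2 * exp (- coord 2 p) | S O => / 2 * exp (coord 2 p) | _ => 0 end.
Definition F2 : vfield := fun i p =>
  match i with O => / 2 * exp (- coord 2 p) | S O => - (/ 2 * exp (coord 2 p)) | _ => 0 end.
Definition F3 : vfield := fun i p =>
  match i with O => 0 | S O => 0 | _ => 1 end.

Definition Xsol (a b c : R) : vfield := fun i p =>
  let x := coord 0 p in let y := coord 1 p in let z := coord 2 p in
  4 * a * (x * exp z * F1 i p + x * exp z * F2 i p - / 2 * F3 i p)
  + 4 * (1 - a) * (y * exp (- z) * F1 i p - y * exp (- z) * F2 i p + / 2 * F3 i p)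
  + b * (exp z * F1 i p + exp z * F2 i p)
  + c * (exp (- z) * F1 i p - exp (- z) * F2 i p).

From Stdlib Require Import Reals Lra Lia ClassicalEpsilon FunctionalExtensionality.
Open Scope R_scope.

(* The metric g1, its inverse and its Christoffel symbols depend on z only;
   the components of X are X^x = 4ax + b, X^y = 4(1-a)y + c, X^z = 2 - 4a.
   Once these tables and their partial derivatives are known, the soliton
   equation 2 Ric + L_X g1 - 4 g1 = 0 is a rational identity in e^z.

   For the non-gradient part, X = grad f means (g1 being diagonal)
     d_z f = 4a - 2,  d_x f = 2 e^(2z) (4ax + b),  d_y f = 2 e^(-2z) (4(1-a)y + c).
   The first equation gives f(x,y,1) = f(x,y,0) + (4a - 2), so d_x f and d_y f
   take the same values at z = 1 and z = 0; hence 4ax + b = 0 for all x and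
   4(1-a)y + c = 0 for all y, i.e. a = 0 and a = 1, a contradiction. *)

Lemma pd_of_derivative i f p l :
  derivable_pt_lim (fun t => f (upd i p t)) (coord i p) l -> pd i f p = l.
Proof.
  intro Hl; unfold pd.
  apply (uniqueness_limite (fun t => f (upd i p t)) (coord i p)); [|exact Hl].
  exact (epsilon_spec (inhabits 0)
           (fun l => derivable_pt_lim (fun t => f (upd i p t)) (coord i p) l)
           (ex_intro _ l Hl)).
Qed.

Lemma smooth_pd_derivative f i p : smooth f -> (i < 3)%nat ->
  derivable_pt_lim (fun t => f (upd i p t)) (coord i p) (pd i f p).
Proof.
  intros Hs Hi; destruct (proj2 (Hs nil) i p Hi) as [d Hd].
  now rewrite (pd_of_derivative i f p d Hd).
Qed.

Lemma derivative_eq f x l l' : derivable_pt_lim f x l -> l = l' -> derivable_pt_lim f x l'.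
Proof. now intros H <-. Qed.

Lemma derivative_mult f g x a b : derivable_pt_lim f x a -> derivable_pt_lim g x b ->
  derivable_pt_lim (fun t => f t * g t) x (a * g x + f x * b).
Proof.
  intros Hf Hg; eapply derivative_eq; [exact (derivable_pt_lim_mult f g x a b Hf Hg)|ring].
Qed.

Lemma derivative_exp_opp x : derivable_pt_lim (fun t => exp (- t)) x (- exp (- x)).
Proof.
  eapply derivative_eq.
  - apply (derivable_pt_lim_comp (fun t => - t) exp x (-1) (exp (- x))).
    + eapply derivative_eq; [apply derivable_pt_lim_opp, derivable_pt_lim_id|ring].
    + apply derivable_pt_lim_exp.
  - ring.
Qed.

(* [derive] proves [derivable_pt_lim f x l] for f built from constants, the
   identity, exp, exp(- _), +, -, * and opposite, leaving l = f'(x) to [ring]. *)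
Ltac derive :=
  eapply derivative_eq;
  [ repeat first [ apply derivable_pt_lim_const | apply derivable_pt_lim_id
                 | apply derivable_pt_lim_exp | apply derivative_exp_opp
                 | apply derivable_pt_lim_plus | apply derivable_pt_lim_minus
                 | apply derivative_mult | apply derivable_pt_lim_opp ]
  | cbv beta; ring ].

Ltac expand := cbv beta iota delta [g1 th1 th2 th3 F1 F2 F3 upd coord fst snd]; cbn.

Ltac index_cases i := destruct i as [|[|[|i]]]; try lia.

Lemma exp_nonzero x : exp x <> 0.
Proof. apply Rgt_not_eq, exp_pos. Qed.

Definition zpart (m : nat) (d : R) : R := match m with 2%nat => d | _ => 0 end.

Lemma pd_z_only f h h' m p : (m < 3)%nat ->
  (forall q, f q = h (coord 2 q)) -> (forall z, derivable_pt_lim h z (h' z)) ->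
  pd m f p = zpart m (h' (coord 2 p)).
Proof.
  intros Hm Hf Hh.
  replace f with (fun q => h (coord 2 q))
    by (symmetry; now apply functional_extensionality).
  destruct p as [[x y] z]; apply pd_of_derivative; index_cases m; expand.
  1, 2: apply derivable_pt_lim_const.
  apply Hh.
Qed.

Definition g1_dz (i j : nat) (z : R) : R :=
  match i, j with
  | O, O => 4 * exp z * exp z
  | S O, S O => - (4 * exp (- z) * exp (- z))
  | _, _ => 0 end.

Lemma pd_g1 m i j p : (m < 3)%nat -> (i < 3)%nat -> (j < 3)%nat ->
  pd m (g1 i j) p = zpart m (g1_dz i j (coord 2 p)).
Proof.
  intros Hm Hi Hj.
  apply (pd_z_only _ (fun z => g1 i j (0, 0, z)) (g1_dz i j)); [exact Hm| |].
  - now intros [[x y] z].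
  - intro z; index_cases i; index_cases j; expand; derive.
Qed.

(* The determinant of g1 is constant, so its inverse is again a table in z. *)
Lemma det_g1 p : det3 g1 p = -4.
Proof.
  unfold det3; destruct p as [[x y] z]; expand; rewrite exp_Ropp; field; apply exp_nonzero.
Qed.

Definition g1_inv (k l : nat) (z : R) : R :=
  match k, l with
  | O, O => exp (- z) * exp (- z) / 2
  | S O, S O => exp z * exp z / 2
  | S (S O), S (S O) => -1
  | _, _ => 0 end.

Lemma ginv_g1 k l p : (k < 3)%nat -> (l < 3)%nat -> ginv g1 k l p = g1_inv k l (coord 2 p).
Proof.
  intros Hk Hl; unfold ginv; rewrite det_g1; destruct p as [[x y] z].
  index_cases k; index_cases l; expand; rewrite ?exp_Ropp; field; apply exp_nonzero.
Qed.

Definition g1_christoffel (k i j : nat) (z : R) : R :=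
  match k, i, j with
  | O, O, S (S O) | O, S (S O), O => 1
  | S O, S O, S (S O) | S O, S (S O), S O => -1
  | S (S O), O, O => 2 * exp z * exp z
  | S (S O), S O, S O => - (2 * exp (- z) * exp (- z))
  | _, _, _ => 0 end.

Definition g1_christoffel_dz (k i j : nat) (z : R) : R :=
  match k, i, j with
  | S (S O), O, O => 4 * exp z * exp z
  | S (S O), S O, S O => 4 * exp (- z) * exp (- z)
  | _, _, _ => 0 end.

Lemma Gamma_g1 k i j p : (k < 3)%nat -> (i < 3)%nat -> (j < 3)%nat ->
  Gamma g1 k i j p = g1_christoffel k i j (coord 2 p).
Proof.
  intros Hk Hi Hj; unfold Gamma, sum3; rewrite !ginv_g1, !pd_g1 by lia.
  index_cases k; index_cases i; index_cases j; expand;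
    rewrite ?exp_Ropp; field; apply exp_nonzero.
Qed.

Lemma pd_Gamma_g1 m k i j p : (m < 3)%nat -> (k < 3)%nat -> (i < 3)%nat -> (j < 3)%nat ->
  pd m (Gamma g1 k i j) p = zpart m (g1_christoffel_dz k i j (coord 2 p)).
Proof.
  intros Hm Hk Hi Hj.
  apply (pd_z_only _ (g1_christoffel k i j) (g1_christoffel_dz k i j)); [exact Hm| |].
  - intro q; now apply Gamma_g1.
  - intro z; index_cases k; index_cases i; index_cases j; expand; derive.
Qed.

Definition X_coef (a b c : R) (k : nat) (x y : R) : R :=
  match k with O => 4 * a * x + b | S O => 4 * (1 - a) * y + c | _ => 2 - 4 * a end.

Definition X_jacobian (a : R) (m k : nat) : R :=
  match m, k with O, O => 4 * a | S O, S O => 4 * (1 - a) | _, _ => 0 end.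

Lemma Xsol_coef a b c k p : (k < 3)%nat ->
  Xsol a b c k p = X_coef a b c k (coord 0 p) (coord 1 p).
Proof.
  intros Hk; destruct p as [[x y] z]; unfold Xsol.
  index_cases k; expand; rewrite ?exp_Ropp; field; apply exp_nonzero.
Qed.

Lemma pd_Xsol a b c m k p : (m < 3)%nat -> (k < 3)%nat ->
  pd m (Xsol a b c k) p = X_jacobian a m k.
Proof.
  intros Hm Hk.
  replace (Xsol a b c k) with (fun q => X_coef a b c k (coord 0 q) (coord 1 q))
    by (apply functional_extensionality; intro q; now rewrite Xsol_coef).
  destruct p as [[x y] z]; apply pd_of_derivative.
  index_cases m; index_cases k; expand; derive.
Qed.

Lemma soliton_equation a b c i j p : (i < 3)%nat -> (j < 3)%nat ->
  2 * Ric g1 i j p + LieD (Xsol a b c) g1 i j p - 4 * g1 i j p = 0.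
Proof.
  intros Hi Hj; unfold Ric, LieD, sum3.
  index_cases i; index_cases j;
    rewrite !pd_Gamma_g1, !Gamma_g1, !pd_g1, !pd_Xsol, !Xsol_coef by lia;
    destruct p as [[x y] z]; expand; rewrite ?exp_Ropp; field; apply exp_nonzero.
Qed.

Lemma gradient_equations a b c f :
  (forall i p, (i < 3)%nat -> Xsol a b c i p = grad g1 f i p) ->
  forall x y z,
    pd 2 f (x, y, z) = 4 * a - 2
    /\ pd 0 f (x, y, z) = 2 * exp z * exp z * (4 * a * x + b)
    /\ pd 1 f (x, y, z) = 2 * exp (- z) * exp (- z) * (4 * (1 - a) * y + c).
Proof.
  intros Hgrad x y z.
  assert (Hcomp : forall i, (i < 3)%nat -> X_coef a b c i x y =
            sum3 (fun j => g1_inv i j z * pd j f (x, y, z))).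
  { intros i Hi; change (X_coef a b c i (coord 0 (x, y, z)) (coord 1 (x, y, z)) =
      sum3 (fun j => g1_inv i j (coord 2 (x, y, z)) * pd j f (x, y, z))).
    rewrite <- Xsol_coef, Hgrad by exact Hi.
    unfold grad, sum3; now rewrite !ginv_g1 by lia. }
  pose proof (Hcomp 0%nat ltac:(lia)) as Ex.
  pose proof (Hcomp 1%nat ltac:(lia)) as Ey.
  pose proof (Hcomp 2%nat ltac:(lia)) as Ez.
  unfold sum3 in Ex, Ey, Ez; cbn in Ex, Ey, Ez; rewrite exp_Ropp in Ex |- *.
  repeat split.
  - lra.
  - rewrite Ex; field; apply exp_nonzero.
  - rewrite Ey; field; apply exp_nonzero.
Qed.

Lemma constant_partial_increment f i k p r s : smooth f -> (i < 3)%nat ->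
  (forall q, pd i f q = k) -> r < s ->
  f (upd i p s) = f (upd i p r) + k * (s - r).
Proof.
  intros Hs Hi Hk Hrs.
  destruct (MVT_cor2 (fun t => f (upd i p t)) (fun _ => k) r s Hrs) as [t [Ht _]].
  - intros t _; pose proof (smooth_pd_derivative f i (upd i p t) Hs Hi) as D.
    rewrite Hk in D; destruct p as [[x y] z]; index_cases i; exact D.
  - lra.
Qed.

Lemma pd_along_translated_lines f i k p q : smooth f -> (i < 3)%nat ->
  coord i p = coord i q -> (forall t, f (upd i p t) = f (upd i q t) + k) ->
  pd i f p = pd i f q.
Proof.
  intros Hs Hi Hpq Htr.
  assert (Dq : derivable_pt_lim (fun t => f (upd i p t)) (coord i p) (pd i f q + 0)).
  { replace (fun t => f (upd i p t)) with (fun t => f (upd i q t) + k)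
      by (apply functional_extensionality; intro t; now rewrite Htr).
    rewrite Hpq; apply derivable_pt_lim_plus;
      [apply smooth_pd_derivative; assumption | apply derivable_pt_lim_const]. }
  rewrite (uniqueness_limite _ _ _ _ (smooth_pd_derivative f i p Hs Hi) Dq); ring.
Qed.

Lemma exp_square_fixed_point r v : r <> 0 -> exp r * exp r * v = v -> v = 0.
Proof.
  intros Hr Hv; rewrite <- exp_plus in Hv.
  assert (Hne : exp (r + r) <> 1).
  { rewrite <- exp_0; intro E; apply exp_inv in E; lra. }
  assert (Hprod : (exp (r + r) - 1) * v = 0).
  { rewrite Rmult_minus_distr_r, Hv; ring. }
  apply Rmult_integral in Hprod as [E|E]; [lra | exact E].
Qed.

Lemma Xsol_not_gradient a b c :
  ~ (exists f : pt -> R, smooth f /\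
       forall (i : nat) (p : pt), (i < 3)%nat -> Xsol a b c i p = grad g1 f i p).
Proof.
  intros [f [Hs Hgrad]].
  pose proof (gradient_equations a b c f Hgrad) as Hpd.
  assert (Hshift : forall x y, f (x, y, 1) = f (x, y, 0) + (4 * a - 2)).
  { intros x y.
    assert (Hz : forall q, pd 2 f q = 4 * a - 2) by (intros [[x' y'] z']; apply Hpd).
    pose proof (constant_partial_increment f 2 _ (x, y, 0) 0 1 Hs ltac:(lia) Hz Rlt_0_1) as E.
    cbn in E; rewrite E; ring. }
  (* d_x f and d_y f agree at z = 1 and z = 0, which forces X^x = X^y = 0. *)
  assert (Hx : forall x, 4 * a * x + b = 0).
  { intro x; apply (exp_square_fixed_point 1); [lra|].
    assert (E : pd 0 f (x, 0, 1) = pd 0 f (x, 0, 0)).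
    { apply (pd_along_translated_lines f 0 (4 * a - 2)); [exact Hs|lia|reflexivity|].
      intro t; apply Hshift. }
    rewrite (proj1 (proj2 (Hpd x 0 1))), (proj1 (proj2 (Hpd x 0 0))), exp_0 in E; lra. }
  assert (Hy : forall y, 4 * (1 - a) * y + c = 0).
  { intro y; apply (exp_square_fixed_point (Ropp 1)); [lra|].
    assert (E : pd 1 f (0, y, 1) = pd 1 f (0, y, 0)).
    { apply (pd_along_translated_lines f 1 (4 * a - 2)); [exact Hs|lia|reflexivity|].
      intro t; apply Hshift. }
    rewrite (proj2 (proj2 (Hpd 0 y 1))), (proj2 (proj2 (Hpd 0 y 0))), Ropp_0, exp_0 in E.
    lra. }
  pose proof (Hx 0); pose proof (Hx 1); pose proof (Hy 0); pose proof (Hy 1); lra.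
Qed.

Theorem theorem5p1 :
  forall a b c : R,
    (forall (i j : nat) (p : pt), (i < 3)%nat -> (j < 3)%nat ->
       2 * Ric g1 i j p + LieD (Xsol a b c) g1 i j p - 4 * g1 i j p = 0)
    /\ ~ (exists f : pt -> R, smooth f /\
           forall (i : nat) (p : pt), (i < 3)%nat -> Xsol a b c i p = grad g1 f i p).
Proof.
  intros a b c; split.
  - intros i j p; apply soliton_equation.
  - apply Xsol_not_gradient.
Qed.
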